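(* Let $K$ be a field, $V$ a $K$-vector space of finite dimension $d>0$, and for $n\ge0$ let $B_n=S^nV$, each equipped with a separated, exhaustive, left continuous $\mathbb R$-filtration, such that $B=\bigoplus_{n\ge0}B_n$ (the symmetric algebra) is an $f$-quasi-filtered graded $K$-algebra for a function $f:\mathbb Z_{\ge0}\to\mathbb R_{\ge0}$, with integer $n_0$ as in that definition. Let $c>0$ and $g:\mathbb R\to\mathbb R$ be concave, increasing and $c$-Lipschitz, and for $n\ge1$ put $I_n=\int_{\mathbb R}g\,d(T_{1/n}\nu_{B_n})$. Then for every integer $r\ge2$ and every $(n_1,\dots,n_r)$ with all $n_i\ge\max(n_0,1)$, writing $N=n_1+\cdots+n_r$, $$N I_N\ \ge\ \sum_{i=1}^r\big(n_iI_{n_i}-c\,f(n_i)\big).$$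
   Context: Filtrations: a decreasing family $(\mathcal F_rW)_{r\in\mathbb R}$ of subspaces; separated: $\bigcap_r\mathcal F_rW=0$; exhaustive: $\bigcup_r\mathcal F_rW=W$; left continuous: $\mathcal F_rW=\bigcap_{s<r}\mathcal F_sW$. For nonzero finite-dimensional $W$ with such a filtration, $\nu_W$ is the Borel probability measure with $\nu_W([r,+\infty[)=\dim\mathcal F_rW/\dim W$ for all $r$. For $\varepsilon>0$, $T_\varepsilon\nu$ denotes the image of the measure $\nu$ under $x\mapsto\varepsilon x$. A graded $K$-algebra $B=\bigoplus_{n\ge0}B_n$ with each $B_n$ filtered by $(B_{n,s})_{s\in\mathbb R}$ is $f$-quasi-filtered if there is an integer $n_0\ge0$ such that for every $r>0$, every $(n_i)_{1\le i\le r}\in\mathbb Z_{\ge n_0}^r$ and every $(s_i)\in\mathbb R^r$, one has $B_{n_1,s_1}\cdots B_{n_r,s_r}\subseteq B_{N,S}$ where $N=\sum n_i$ and $S=\sum_i(s_i-f(n_i))$. *)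

From HB Require Import structures.
From mathcomp Require Import all_boot all_order all_algebra.
From Stdlib Require Import Reals ClassicalEpsilon List.

Set Implicit Arguments.
Unset Strict Implicit.
Unset Printing Implicit Defensive.

Import GRing.Theory.

(* The symmetric algebra S(V) of V = K^d, concretely: S^n V is the    *)
(* space of homogeneous polynomials of degree n in d variables,       *)
(* represented by their coefficient function on degree-n monomials.   *)

Definition mon (d n : nat) :=
  {m : {ffun 'I_d -> 'I_n.+1} | (\sum_(i < d) (m i : nat) == n)%N}.

Definition Bdeg (K : fieldType) (d n : nat) := {ffun mon d n -> K^o}.

Section Mul.
Local Open Scope ring_scope.
Definition mulB (K : fieldType) (d n m : nat) (a : Bdeg K d n) (b : Bdeg K d m)
  : Bdeg K d (n + m) :=
  [ffun t : mon d (n + m) =>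
     (\sum_(u : mon d n) \sum_(v : mon d m |
          [forall i, (val t i : nat) == addn (val u i) (val v i)])
        (GRing.mul (a u) (b v)))].

End Mul.

Definition oneB (K : fieldType) (d : nat) : Bdeg K d 0 := [ffun _ => GRing.one K^o].

Definition Hom (K : fieldType) (d : nat) := {n : nat & Bdeg K d n}.

Definition mulH (K : fieldType) (d : nat) (x y : Hom K d) : Hom K d :=
  existT _ (projT1 x + projT1 y)%N (mulB (projT2 x) (projT2 y)).

Definition prodH (K : fieldType) (d : nat) (l : list (Hom K d)) : Hom K d :=
  foldr (@mulH K d) (existT _ 0%N (oneB K d)) l.

Definition filtration (K : fieldType) (W : vectType K) := R -> {vspace W}.

Definition decreasing_filt (K : fieldType) (W : vectType K) (F : filtration W) :=
  forall r s : R, Rle r s -> (F s <= F r)%VS.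

Definition separated_filt (K : fieldType) (W : vectType K) (F : filtration W) :=
  forall v : W, (forall r : R, v \in F r) -> v = (@GRing.zero W).

Definition exhaustive_filt (K : fieldType) (W : vectType K) (F : filtration W) :=
  forall v : W, exists r : R, v \in F r.

Definition left_continuous_filt (K : fieldType) (W : vectType K) (F : filtration W) :=
  forall (r : R) (v : W), v \in F r <-> (forall s : R, Rlt s r -> v \in F s).

Definition good_filt (K : fieldType) (W : vectType K) (F : filtration W) :=
  [/\ decreasing_filt F, separated_filt F, exhaustive_filt F & left_continuous_filt F].

(* The measure nu_W, as a finite family of atoms (point, weight).      *)
(* A list L of atoms represents nu_W when its weights are >= 0 and     *)
(* nu_L([r,+oo[) = dim F_r W / dim W for every real r.  Such a Borel   *)
(* probability measure is unique, so this determines nu_W.             *)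

Definition Rsum (l : list R) : R := fold_right Rplus R0 l.

Definition mass_from (L : list (R * R)) (r : R) : R :=
  Rsum (List.map snd (List.filter (fun p => if Rle_dec r (fst p) then true else false) L)).

Definition represents_nu (K : fieldType) (W : vectType K) (F : filtration W)
    (L : list (R * R)) : Prop :=
  (forall p, List.In p L -> Rle R0 (snd p)) /\
  forall r : R,
    mass_from L r = Rdiv (INR (\dim (F r))) (INR (\dim (fullv : {vspace W}))).

Definition nu (K : fieldType) (W : vectType K) (F : filtration W) : list (R * R) :=
  epsilon (inhabits nil) (represents_nu F).

(* integral of h against the image of the atomic measure L under x |-> eps * x *)
Definition integral_scaled (h : R -> R) (eps : R) (L : list (R * R)) : R :=
  Rsum (List.map (fun p => Rmult (snd p) (h (Rmult eps (fst p)))) L).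

Definition I_n (K : fieldType) (d : nat) (F : forall n : nat, filtration (Bdeg K d n))
    (g : R -> R) (n : nat) : R :=
  integral_scaled g (Rinv (INR n)) (nu (F n)).

Definition quasi_filtered (K : fieldType) (d : nat)
    (F : forall n : nat, filtration (Bdeg K d n)) (f : nat -> R) (n0 : nat) : Prop :=
  forall (r : nat) (ns : 'I_r -> nat) (ss : 'I_r -> R)
         (x : forall i : 'I_r, Bdeg K d (ns i)),
    (0 < r)%N ->
    (forall i, (n0 <= ns i)%N) ->
    (forall i, x i \in F (ns i) (ss i)) ->
    let P := prodH [seq existT (fun n => Bdeg K d n) (ns i) (x i) | i <- enum 'I_r] in
    projT2 P \in F (projT1 P)
       (Rsum (List.map (fun i => Rminus (ss i) (f (ns i))) (enum 'I_r))).

Definition concave (g : R -> R) : Prop :=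
  forall x y t : R, Rle R0 t -> Rle t R1 ->
    Rle (Rplus (Rmult t (g x)) (Rmult (Rminus R1 t) (g y)))
        (g (Rplus (Rmult t x) (Rmult (Rminus R1 t) y))).

Definition increasingR (g : R -> R) : Prop :=
  forall x y : R, Rle x y -> Rle (g x) (g y).

Definition lipschitz (c : R) (g : R -> R) : Prop :=
  forall x y : R, Rle (Rabs (Rminus (g x) (g y))) (Rmult c (Rabs (Rminus x y))).

From HB Require Import structures.
From mathcomp Require Import all_boot all_order all_algebra.
From Stdlib Require Import Reals Lra Lia ClassicalEpsilon Classical.
From mathcomp Require Import zify.

(* Ordering monomials by a base-B code of their exponents, every nonzero
   element of S^n V has a leading monomial, leading monomials multiply, and
   dim U is the number of monomials leading an element of U.  So F_n is
   encoded by one jump lam(a) per monomial a, nu_{S^n V} is uniform on these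
   jumps, and the quasi-filtration axiom gives
   lam(a_1 ... a_r) >= sum_i (lam(a_i) - f(n_i)).  The uniform law on
   monomials of degree n is the image, under letter counting, of the Polya
   urn law on words of length n, whose contiguous blocks again follow the urn
   law.  Cutting words of length N into blocks of lengths n_i reduces the
   theorem to a pointwise inequality, proved by Lipschitz continuity, Jensen's
   inequality and monotonicity of g. *)

Set Implicit Arguments.
Unset Strict Implicit.
Unset Printing Implicit Defensive.

Import GRing.Theory.

Definition propb (P : Prop) : bool := if excluded_middle_informative P then true else false.

Lemma propbP (P : Prop) : reflect P (propb P).
Proof. by rewrite /propb; case: excluded_middle_informative => H; constructor. Qed.

Lemma Rplus_associative : associative Rplus.
Proof. by move=> x y z; rewrite Rplus_assoc. Qed.

HB.instance Definition _ :=
  Monoid.isComLaw.Build R R0 Rplus Rplus_associative Rplus_comm Rplus_0_l.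

Section RealSums.
Local Open Scope R_scope.
Variable I : Type.
Implicit Types (l : seq I) (F G : I -> R).

Lemma Rsum_big l F : Rsum (List.map F l) = \big[Rplus/0]_(i <- l) F i.
Proof. by elim: l => [|x l IH]; rewrite ?big_nil ?big_cons //= IH. Qed.

Lemma Rsum_distr l (P : pred I) F c :
  c * (\big[Rplus/0]_(i <- l | P i) F i) = \big[Rplus/0]_(i <- l | P i) (c * F i).
Proof.
elim: l => [|x l IH]; rewrite ?big_nil ?big_cons; first by rewrite Rmult_0_r.
by case: (P x); rewrite -IH // Rmult_plus_distr_l.
Qed.

Lemma Rsum_distr_r l F c :
  (\big[Rplus/0]_(i <- l) F i) * c = \big[Rplus/0]_(i <- l) (F i * c).
Proof. by rewrite Rmult_comm Rsum_distr; apply: eq_bigr => i _; rewrite Rmult_comm. Qed.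

Lemma Rsum_split l F G :
  \big[Rplus/0]_(i <- l) (F i + G i) =
  \big[Rplus/0]_(i <- l) F i + \big[Rplus/0]_(i <- l) G i.
Proof. by elim: l => [|x l IH]; rewrite ?big_nil ?big_cons ?IH; lra. Qed.

Lemma Rsum_const l (P : pred I) c :
  \big[Rplus/0]_(i <- l | P i) c = INR (count P l) * c.
Proof.
elim: l => [|x l IH]; rewrite ?big_nil ?big_cons /=; first by rewrite Rmult_0_l.
by case: (P x); rewrite IH ?add1n ?add0n ?S_INR; ring.
Qed.

Lemma Rsum_le l (P : pred I) F G : (forall i, P i -> F i <= G i) ->
  \big[Rplus/0]_(i <- l | P i) F i <= \big[Rplus/0]_(i <- l | P i) G i.
Proof.
move=> FG; elim: l => [|x l IH]; rewrite ?big_nil ?big_cons; first exact: Rle_refl.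
by case Px: (P x) => //; apply: Rplus_le_compat => //; apply: FG.
Qed.

Lemma Rsum_pos l F : (forall i, 0 < F i) -> l <> [::] -> 0 < \big[Rplus/0]_(i <- l) F i.
Proof.
move=> F_pos; elim: l => [//|x [|y l] IH] _; rewrite big_cons.
- by rewrite big_nil Rplus_0_r.
- by have := IH ltac:(done); have := F_pos x; lra.
Qed.

Lemma INR_sum l (m : I -> nat) :
  INR (\sum_(i <- l) m i)%nat = \big[Rplus/0]_(i <- l) INR (m i).
Proof. by elim: l => [|x l IH]; rewrite ?big_nil ?big_cons //= plus_INR IH. Qed.

Lemma jensen (g : R -> R) l (w y : I -> R) :
  concave g -> (forall i, 0 < w i) -> l <> [::] ->
  \big[Rplus/0]_(i <- l) (w i * g (y i)) <=
  (\big[Rplus/0]_(i <- l) w i) *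
    g ((\big[Rplus/0]_(i <- l) (w i * y i)) / \big[Rplus/0]_(i <- l) w i).
Proof.
move=> g_conc w_pos; elim: l => [//|x l IH] _; rewrite !big_cons.
case: l IH => [|z l] IH.
  rewrite !big_nil !Rplus_0_r; have := w_pos x => wx.
  have -> : w x * y x / w x = y x by field; lra.
  exact: Rle_refl.
set W := \big[Rplus/0]_(i <- z :: l) w i.
set S := \big[Rplus/0]_(i <- z :: l) (w i * y i).
have W_pos : 0 < W by apply: Rsum_pos.
have wx := w_pos x.
set t := w x / (w x + W).
have t_ge0 : 0 <= t by apply: Rlt_le; apply: Rdiv_lt_0_compat; lra.
have t_le1 : t <= 1.
  apply: (Rmult_le_reg_r (w x + W)); first lra.
  by rewrite /t /Rdiv Rmult_assoc Rinv_l; lra.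
have := g_conc (y x) (S / W) t t_ge0 t_le1.
have -> : t * y x + (1 - t) * (S / W) = (w x * y x + S) / (w x + W)
  by rewrite /t; field; lra.
move=> Hconc.
apply: Rle_trans (Rplus_le_compat_l _ _ _ (IH ltac:(done))) _.
have -> : w x * g (y x) + W * g (S / W) =
          (w x + W) * (t * g (y x) + (1 - t) * g (S / W)) by rewrite /t; field; lra.
by apply: Rmult_le_compat_l; lra.
Qed.

End RealSums.

(* A finite atomic measure is a list of atoms (position, weight); [mass_from]
   gives the mass of [r, +oo[.  Two atomic measures with the same tail masses
   integrate every function to the same value: this identifies the integral
   against nu_W computed from any representative of nu_W. *)
Section AtomicMeasures.
Local Open Scope R_scope.
Implicit Types (L : list (R * R)) (k : R -> R).

Definition atom_integral k L : R := Rsum (List.map (fun p => snd p * k (fst p)) L).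

Definition off_atom (M : R) (p : R * R) : bool :=
  if Req_EM_T (fst p) M then false else true.

Definition at_atom (M : R) (p : R * R) : bool := ~~ off_atom M p.

Lemma at_atomE M p : at_atom M p -> fst p = M.
Proof. by rewrite /at_atom /off_atom; case: Req_EM_T. Qed.

Lemma Rsum_filter {A} (G : A -> R) (P : A -> bool) (L : list A) :
  Rsum (List.map G L) = Rsum (List.map G (List.filter P L)) +
                        Rsum (List.map G (List.filter (fun p => ~~ P p) L)).
Proof. by elim: L => [|a L IH] /=; [|case: (P a) => /=; rewrite IH]; lra. Qed.

Lemma filter_comm {A} (P Q : A -> bool) (L : list A) :
  List.filter P (List.filter Q L) = List.filter Q (List.filter P L).
Proof.
elim: L => [|a L IH] //=.
by case HP: (P a); case HQ: (Q a); rewrite /= ?HP ?HQ IH.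
Qed.

Lemma filter_id_in {A} (P : A -> bool) (L : list A) :
  (forall p, List.In p L -> P p) -> List.filter P L = L.
Proof.
elim: L => [|a L IH] //= HL.
by rewrite HL; [rewrite IH // => p Hp; apply: HL; right | left].
Qed.

Lemma filter_nil_in {A} (P : A -> bool) (L : list A) :
  (forall p, List.In p L -> ~~ P p) -> List.filter P L = nil.
Proof.
elim: L => [|a L IH] //= HL.
by rewrite (negbTE (HL a _)); [rewrite IH // => p Hp; apply: HL; right | left].
Qed.

Lemma length_filter {A} (P : A -> bool) (L : list A) :
  (length (List.filter P L) <= length L)%coq_nat.
Proof. by elim: L => [|a L IH] /=; [|case: (P a) => /=]; lia. Qed.

Lemma length_filter_lt {A} (P : A -> bool) (L : list A) p :
  List.In p L -> ~~ P p -> (length (List.filter P L) < length L)%coq_nat.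
Proof.
elim: L => [|a L IH] //= [->|Hp] HP.
- by rewrite (negbTE HP); have := length_filter P L; lia.
- by case: (P a) => /=; have := IH Hp HP; lia.
Qed.

Definition max_atom L (m0 : R) : R := List.fold_right (fun p m => Rmax (fst p) m) m0 L.

Lemma max_atom_ge L m0 :
  m0 <= max_atom L m0 /\ forall p, List.In p L -> fst p <= max_atom L m0.
Proof.
elim: L => [|a L [IH1 IH2]] /=; split=> //; first lra.
- exact: Rle_trans IH1 (Rmax_r _ _).
- move=> p [->|Hp]; first exact: Rmax_l.
  exact: Rle_trans (IH2 p Hp) (Rmax_r _ _).
Qed.

Lemma max_atom_attained L m0 :
  max_atom L m0 = m0 \/ exists2 p, List.In p L & fst p = max_atom L m0.
Proof.
elim: L => [|a L IH] /=; first by left.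
apply Rmax_case; first by right; exists a => //; left.
by case: IH => [|[p Hp Hq]]; [left | right; exists p => //; right].
Qed.

Lemma mass_from_split_top L M r : (forall p, List.In p L -> fst p <= M) ->
  mass_from L r = mass_from (List.filter (off_atom M) L) r +
    (if Rle_dec r M then Rsum (List.map snd (List.filter (at_atom M) L)) else 0).
Proof.
move=> L_le; rewrite /mass_from (Rsum_filter snd (off_atom M)).
rewrite (filter_comm (off_atom M)) (filter_comm (fun p => ~~ off_atom M p)).
congr Rplus; case: Rle_dec => [rM|rM].
- by rewrite filter_id_in // => p /List.filter_In [_ /at_atomE ->]; case: Rle_dec.
- by rewrite filter_nil_in // => p /List.filter_In [_ /at_atomE ->]; case: Rle_dec.
Qed.

Lemma atom_integral_split k L M :
  atom_integral k L = atom_integral k (List.filter (off_atom M) L) +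
    Rsum (List.map snd (List.filter (at_atom M) L)) * k M.
Proof.
rewrite /atom_integral /at_atom (Rsum_filter _ (off_atom M)); congr Rplus.
elim: L => [|a L IH] /=; first lra.
case Ha: (off_atom M a) => //=.
by rewrite IH (at_atomE (negbT Ha)); lra.
Qed.

Lemma mass_from_top L M : (forall p, List.In p L -> fst p <= M) ->
  mass_from L M = Rsum (List.map snd (List.filter (at_atom M) L)).
Proof.
move=> L_le; rewrite (mass_from_split_top M L_le).
destruct (Rle_dec M M) as [MM|nMM]; last by case: nMM; apply: Rle_refl.
suff -> : mass_from (List.filter (off_atom M) L) M = 0 by rewrite /=; lra.
rewrite /mass_from filter_nil_in // => p /List.filter_In [Hp].
rewrite /off_atom; case: Req_EM_T => // pM _.
by case: Rle_dec => //= Mp; have := L_le p Hp; lra.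
Qed.

(* By induction on the number of atoms: the atoms at the largest position M
   carry the same total mass mass_from M in both lists, and removing them
   preserves the equality of tail masses. *)
Lemma atom_integral_unique L L' : (forall r, mass_from L r = mass_from L' r) ->
  forall k, atom_integral k L = atom_integral k L'.
Proof.
move=> same_mass k.
have [n size_le] : exists n, (length L + length L' <= n)%coq_nat by exists (length L + length L')%coq_nat.
revert L L' size_le same_mass; elim: n => [|n IH] L L' size_le same_mass.
  by case: L L' size_le {same_mass} => [|? ?] [|? ?] /= size_le //; move: size_le => /=; lia.
case Hcat: (List.app L L') => [|p0 l0].
  by case: L Hcat {same_mass size_le} => [|? ?]; case: L' => [|? ?].
set M := max_atom (List.app L L') (fst p0).
have [_ M_ge] := max_atom_ge (List.app L L') (fst p0).
have L_le p : List.In p L -> fst p <= M.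
  by move=> Hp; apply: M_ge; apply: List.in_or_app; left.
have L'_le p : List.In p L' -> fst p <= M.
  by move=> Hp; apply: M_ge; apply: List.in_or_app; right.
have top_eq := same_mass M.
rewrite (mass_from_top L_le) (mass_from_top L'_le) in top_eq.
rewrite (atom_integral_split k L M) (atom_integral_split k L' M) top_eq.
congr (_ + _); apply: IH; last first.
  move=> r; have := same_mass r.
  by rewrite (mass_from_split_top r L_le) (mass_from_split_top r L'_le) top_eq; lra.
have [p Hp pM] : exists2 p, List.In p L \/ List.In p L' & fst p = M.
  case: (max_atom_attained (List.app L L') (fst p0)) => [E|[p Hp pM]].
  - by exists p0 => //; apply: List.in_app_or; rewrite Hcat; left.
  - by exists p => //; apply: List.in_app_or.
have off_p : ~~ off_atom M p by rewrite /off_atom pM; case: Req_EM_T.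
case: Hp => Hp; have := length_filter_lt Hp off_p;
  [have := length_filter (off_atom M) L' | have := length_filter (off_atom M) L]; lia.
Qed.

End AtomicMeasures.

Lemma nat_least (P : nat -> Prop) :
  (exists n, P n) -> exists2 m, P m & forall k, P k -> (m <= k)%nat.
Proof.
move=> [n Pn]; have ex : exists n, propb (P n) by exists n; apply/propbP.
case: (ex_minnP ex) => m /propbP Pm m_min.
by exists m => // k Pk; apply: m_min; apply/propbP.
Qed.

(* A good filtration of a finite-dimensional space vanishes far to the right
   and is locally constant to the left of every point; consequently, for every
   monotone property of subspaces that fails for 0, the set of t such that
   F t has the property is a closed half-line ]-oo, lam]. *)
Section FiltrationThreshold.
Local Open Scope R_scope.
Variables (K : fieldType) (W : vectType K) (F : filtration W).
Hypothesis F_good : good_filt F.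

Lemma filt_decr r s : r <= s -> (F s <= F r)%VS.
Proof. by case: F_good => F_decr _ _ _; apply: F_decr. Qed.

Lemma filt_vanishes : exists t0, F t0 = 0%VS.
Proof.
case: F_good => _ F_sep _ _.
have some_dim : exists m, exists t, \dim (F t) = m by exists (\dim (F 0)), 0.
have [m [t0 dim_t0] m_min] := nat_least some_dim.
have F_const t : t0 <= t -> F t = F t0.
  move=> t0t; apply/eqP; rewrite eqEdim filt_decr //= dim_t0.
  by apply: m_min; exists t.
exists t0; apply/eqP; rewrite -subv0; apply/subvP => v v_t0.
rewrite memv0; apply/eqP; apply: F_sep => t.
case: (Rle_dec t0 t) => [t0t|tt0]; first by rewrite F_const.
have tt0' : t <= t0 by lra.
exact: (subvP (filt_decr tt0')).
Qed.

Lemma filt_left_stable lam : exists2 s, s < lam & (F s <= F lam)%VS.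
Proof.
case: F_good => _ _ _ F_lc.
have some_dim : exists m, exists t, t < lam /\ \dim (F t) = m.
  by exists (\dim (F (lam - 1))), (lam - 1); split=> //; lra.
have [m [s [s_lt dim_s]] m_min] := nat_least some_dim.
exists s => //; apply/subvP => v v_lam; apply/F_lc => u u_lt.
case: (Rle_dec u s) => [us|su]; first exact: (subvP (filt_decr us)).
have -> : F u = F s; last by [].
apply/eqP; rewrite eqEdim filt_decr /=; last lra.
by rewrite dim_s; apply: m_min; exists u.
Qed.

Variable P : {vspace W} -> Prop.
Hypothesis P_mono : forall U V, P U -> (U <= V)%VS -> P V.
Hypothesis P_not0 : ~ P 0%VS.
Hypothesis P_some : exists t, P (F t).

Lemma filt_threshold : exists lam, forall t, P (F t) <-> t <= lam.
Proof.
have [t0 F_t0] := filt_vanishes.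
have P_bounded : bound (fun t => P (F t)).
  exists t0 => t Pt; case: (Rle_dec t t0) => // tt0.
  by case: P_not0; apply: (P_mono Pt); rewrite -F_t0; apply: filt_decr; lra.
have [lam [lam_ub lam_lub]] := completeness _ P_bounded P_some.
exists lam => t; split; first exact: lam_ub.
suff P_lam : P (F lam) by move=> tl; apply: (P_mono P_lam); apply: filt_decr.
have [s s_lt F_s] := filt_left_stable lam.
have [u Pu su] : exists2 u, P (F u) & s < u.
  apply: NNPP => no_u; have : lam <= s; last lra.
  apply: lam_lub => u Pu; case: (Rle_dec u s) => // us.
  by case: no_u; exists u => //; lra.
by apply: (P_mono Pu); apply: subv_trans F_s; apply: filt_decr; lra.
Qed.

End FiltrationThreshold.

Lemma digits_inj (B d : nat) (u v : 'I_d -> nat) :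
  (forall i, u i < B)%nat -> (forall i, v i < B)%nat ->
  (\sum_(i < d) u i * expn B i = \sum_(i < d) v i * expn B i)%nat -> forall i, u i = v i.
Proof.
elim: d u v => [|d IH] u v u_lt v_lt; first by move=> _ [].
have B_pos : (0 < B)%nat by apply: leq_ltn_trans (u_lt ord0).
have shift (w : 'I_d.+1 -> nat) : (\sum_(i < d) w (lift ord0 i) * expn B (bump 0 i) =
    (\sum_(i < d) w (lift ord0 i) * expn B i) * B)%nat.
  by rewrite big_distrl; apply: eq_bigr => i _; rewrite /bump leq0n add1n expnS mulnCA mulnC.
rewrite !big_ord_recl /= !expn0 !muln1 !shift => code_eq.
have digit0 : u ord0 = v ord0.
  have := congr1 (modn^~ B) code_eq.
  by rewrite /= !(addnC (u ord0)) !(addnC (v ord0)) !modnMDl !modn_small.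
have rest_eq : (\sum_(i < d) u (lift ord0 i) * expn B i = \sum_(i < d) v (lift ord0 i) * expn B i)%nat.
  move: code_eq; rewrite digit0 => /eqP; rewrite eqn_add2l => /eqP code_eq.
  by apply/eqP; rewrite -(eqn_pmul2r B_pos) code_eq.
move=> i; case: (unliftP ord0 i) => [j ->|->] //.
exact: (IH (fun j => u (lift ord0 j)) (fun j => v (lift ord0 j))).
Qed.

(* Monomials of degree n in d variables, seen through their exponent vectors,
   and totally ordered by the base-B code of these vectors (B > n). *)
Section LeadingMonomials.
Variables (K : fieldType) (d B : nat).

Definition expo n (a : mon d n) : {ffun 'I_d -> nat} := [ffun i => nat_of_ord (val a i)].

Lemma expo_sum n (a : mon d n) : (\sum_i expo a i)%nat = n.
Proof. by apply: etrans (eqP (valP a)); apply: eq_bigr => i _; rewrite ffunE. Qed.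

Lemma expo_le n (a : mon d n) i : (expo a i <= n)%nat.
Proof. by rewrite -{2}(expo_sum a) (bigD1 i) //= leq_addr. Qed.

Lemma expo_inj n : injective (@expo n).
Proof.
move=> a b ab; apply: val_inj; apply/ffunP => i; apply: val_inj.
by have := congr1 (fun e : {ffun _ -> nat} => e i) ab; rewrite /= !ffunE.
Qed.

Lemma expo_surj n (v : {ffun 'I_d -> nat}) :
  (\sum_i v i)%nat = n -> exists a : mon d n, expo a = v.
Proof.
move=> v_sum; have v_lt i : (v i < n.+1)%nat by rewrite ltnS -v_sum (bigD1 i) //= leq_addr.
pose e : {ffun 'I_d -> 'I_n.+1} := [ffun i => Ordinal (v_lt i)].
have e_sum : (\sum_(i < d) (e i : nat) == n)%nat.
  by apply/eqP; apply: etrans v_sum; apply: eq_bigr => i _; rewrite ffunE.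
by exists (exist _ e e_sum); apply/ffunP => i; rewrite !ffunE.
Qed.

Definition code (v : {ffun 'I_d -> nat}) : nat := (\sum_(i < d) v i * expn B i)%nat.
Definition vadd (u v : {ffun 'I_d -> nat}) : {ffun 'I_d -> nat} := [ffun i => (u i + v i)%nat].
Definition vzero : {ffun 'I_d -> nat} := [ffun _ => 0%nat].

Lemma code_vadd u v : code (vadd u v) = (code u + code v)%nat.
Proof. by rewrite /code -big_split /=; apply: eq_bigr => i _; rewrite ffunE mulnDl. Qed.

Lemma code_inj n (a b : mon d n) : (n < B)%nat -> code (expo a) = code (expo b) -> a = b.
Proof.
move=> nB code_ab; apply: expo_inj; apply/ffunP => i.
by apply: (digits_inj _ _ code_ab) => j; apply: leq_ltn_trans (expo_le _ _) nB.
Qed.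

Local Open Scope ring_scope.

Definition leads n (x : Bdeg K d n) (v : {ffun 'I_d -> nat}) : Prop :=
  exists a : mon d n, [/\ expo a = v, x a != 0 &
     forall t : mon d n, (code (expo a) < code (expo t))%nat -> x t = 0].

Lemma mulBE n m (x : Bdeg K d n) (y : Bdeg K d m) t :
  mulB x y t = \sum_(u : mon d n) \sum_(v : mon d m | expo t == vadd (expo u) (expo v))
                 x u * y v.
Proof.
rewrite /mulB ffunE; apply: eq_bigr => u _; apply: eq_bigl => v.
apply/forallP/eqP => [tuv|tuv].
- by apply/ffunP => i; rewrite !ffunE; apply/eqP/tuv.
- by move=> i; have := congr1 (fun e : {ffun _ -> nat} => e i) tuv; rewrite /= !ffunE => ->.
Qed.

Lemma leads_mulB n m (x : Bdeg K d n) (y : Bdeg K d m) u0 v0 : (n + m < B)%nat ->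
  leads x u0 -> leads y v0 -> leads (mulB x y) (vadd u0 v0).
Proof.
move=> nmB [al [al_u0 x_al x_above]] [be [be_v0 y_be y_above]].
have nB : (n < B)%nat by apply: leq_ltn_trans nmB; apply: leq_addr.
have below u v : x u * y v != 0 ->
    (code (expo u) <= code (expo al))%nat /\ (code (expo v) <= code (expo be))%nat.
  rewrite mulf_eq0 negb_or => /andP [xu yv].
  by split; rewrite leqNgt; apply/negP => lt; [move: xu | move: yv];
     rewrite ?x_above ?y_above ?eqxx.
have [tau tau_uv] : exists tau : mon d (n + m), expo tau = vadd u0 v0.
  apply: expo_surj; rewrite -al_u0 -be_v0.
  by under eq_bigr => i _ do rewrite ffunE; rewrite big_split /= !expo_sum.
exists tau; split => //.
- rewrite mulBE (bigD1 al) //= (bigD1 be) /=; last by rewrite tau_uv al_u0 be_v0.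
  have other_v : \sum_(v | (expo tau == vadd (expo al) (expo v)) && (v != be)) x al * y v = 0.
    apply: big1 => v /andP [tau_v v_be]; case/negP: v_be; apply/eqP/expo_inj.
    apply/ffunP => i; have := congr1 (fun e : {ffun _ -> nat} => e i) (eqP tau_v).
    by rewrite tau_uv -al_u0 -be_v0 /= !ffunE => /eqP; rewrite eqn_add2l => /eqP.
  have other_u : \sum_(u | u != al) \sum_(v | expo tau == vadd (expo u) (expo v)) x u * y v = 0.
    apply: big1 => u u_al; apply: big1 => v tau_v; apply/eqP/negPn/negP => xy.
    have [le_u le_v] := below _ _ xy.
    have code_sum : (code (expo u) + code (expo v) = code (expo al) + code (expo be))%nat.
      by rewrite -!code_vadd -(eqP tau_v) tau_uv al_u0 be_v0.
    have code_u : code (expo u) = code (expo al).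
      apply/eqP; rewrite eqn_leq le_u /= -(leq_add2r (code (expo v))) code_sum.
      exact: leq_add.
    by move: u_al; rewrite (code_inj nB code_u) eqxx.
  by rewrite other_v other_u !addr0 mulf_neq0.
- move=> t tau_t; rewrite mulBE; apply: big1 => u _; apply: big1 => v t_uv.
  apply/eqP/negPn/negP => xy; have [le_u le_v] := below _ _ xy.
  move: tau_t; rewrite (eqP t_uv) code_vadd tau_uv code_vadd -al_u0 -be_v0 ltnNge.
  by rewrite leq_add.
Qed.

Lemma leads_oneB : leads (oneB K d) vzero.
Proof.
have [a a0] : exists a : mon d 0, expo a = vzero.
  by apply: expo_surj; rewrite big1 // => i _; rewrite ffunE.
exists a; split => //; first by rewrite ffunE oner_eq0.
move=> t; suff -> : expo t = expo a by rewrite ltnn.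
apply/ffunP => i; rewrite a0 [vzero i]ffunE; apply/eqP; rewrite -leqn0; exact: expo_le.
Qed.

Lemma leads_prodH (I : Type) (idx : seq I) (ns : I -> nat)
    (x : forall i, Bdeg K d (ns i)) (lead : I -> {ffun 'I_d -> nat}) :
  (\sum_(i <- idx) ns i < B)%nat -> (forall i, leads (x i) (lead i)) ->
  let P := prodH [seq existT (fun n => Bdeg K d n) (ns i) (x i) | i <- idx] in
  projT1 P = (\sum_(i <- idx) ns i)%nat /\
  leads (projT2 P) (foldr (fun i acc => vadd (lead i) acc) vzero idx).
Proof.
elim: idx => [|i l IH] sumB x_lead /=.
  by rewrite big_nil; split => //; apply: leads_oneB.
rewrite big_cons in sumB.
have [deg_l lead_l] := IH (leq_ltn_trans (leq_addl _ _) sumB) x_lead.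
split; first by rewrite big_cons -deg_l.
by apply: leads_mulB => //; rewrite deg_l.
Qed.

End LeadingMonomials.

(* The dimension of a subspace U of S^n V is the number of monomials that are
   the leading monomial of some element of U: the coordinate projection onto
   these monomials is injective on U, and elements of U with distinct leading
   monomials are linearly independent. *)
Section LeadingDimension.
Variables (K : fieldType) (d B n : nat).
Hypothesis nB : (n < B)%nat.
Local Open Scope ring_scope.

Definition coord_proj (A : pred (mon d n)) (x : Bdeg K d n) : Bdeg K d n :=
  [ffun t => if A t then x t else 0].

Lemma coord_proj_linear A : linear_for *:%R (coord_proj A).
Proof.
by move=> a u v; apply/ffunP => t; rewrite !ffunE; case: (A t); rewrite ?ffunE ?scaler0 ?addr0.
Qed.

HB.instance Definition _ A :=
  GRing.isLinear.Build K (Bdeg K d n) (Bdeg K d n) *:%R (coord_proj A) (coord_proj_linear A).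

Lemma scale_regularE (a b : K^o) : a *: b = a * b.
Proof. by []. Qed.

Definition monomial (t : mon d n) : Bdeg K d n := [ffun s => if s == t then 1 else 0].

Lemma leads_monomial (a : mon d n) : leads B (monomial a) (expo a).
Proof.
exists a; split => //; first by rewrite ffunE eqxx oner_eq0.
by move=> t; rewrite ffunE; case: eqP => // ->; rewrite ltnn.
Qed.

Lemma leads_at (x : Bdeg K d n) (a : mon d n) : leads B x (expo a) ->
  x a != 0 /\ forall t : mon d n, (code B (expo a) < code B (expo t))%nat -> x t = 0.
Proof. by case=> be [/expo_inj -> x_be x_above]. Qed.

Lemma leads_exists (x : Bdeg K d n) : x != 0 -> exists a : mon d n, leads B x (expo a).
Proof.
move=> x_neq0; have [t0 xt0] : exists t0, x t0 != 0.
  apply: NNPP => x0; case/negP: x_neq0; apply/eqP/ffunP => t.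
  by rewrite ffunE; apply/eqP; apply: NNPP => xt; apply: x0; exists t; apply/negP.
have [a xa a_max] := @arg_maxnP _ t0 (fun t => x t != 0) (fun t => code B (expo t)) xt0.
exists a, a; split => // t a_t; apply/eqP; apply: NNPP => /negP xt.
have le_t : (code B (expo t) <= code B (expo a))%nat := a_max t xt.
by rewrite leqNgt a_t in le_t.
Qed.

Variable U : {vspace Bdeg K d n}.

Definition leading (a : mon d n) : Prop := exists2 x, x \in U & leads B x (expo a).
Definition leadingb : pred (mon d n) := fun a => propb (leading a).

Lemma dim_le_leading : (\dim U <= #|leadingb|)%nat.
Proof.
pose f := linfun (coord_proj leadingb).
have ker_f : (U :&: lker f = 0)%VS.
  apply/eqP; rewrite -subv0; apply/subvP => x /memv_capP [xU].
  rewrite memv_ker lfunE /= memv0 => /eqP fx0; apply/negPn/negP => x_neq0.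
  have [a x_a] := leads_exists x_neq0.
  have a_lead : leadingb a by apply/propbP; exists x.
  have := congr1 (fun y : Bdeg K d n => y a) fx0; rewrite /= !ffunE a_lead.
  by have [xa _] := leads_at x_a; move/eqP: xa.
rewrite -(limg_dim_eq ker_f).
have img_f : (f @: U <= <<[seq monomial t | t <- enum leadingb]>>)%VS.
  apply/subvP => y /memv_imgP [x _ ->]; rewrite lfunE /=.
  have -> : coord_proj leadingb x = \sum_(t <- enum leadingb) x t *: monomial t.
    apply/ffunP => s; rewrite sum_ffunE ffunE.
    under eq_bigr => t _ do rewrite !ffunE scale_regularE.
    case s_lead: (leadingb s).
    - rewrite (bigD1_seq s) /= ?mem_enum ?enum_uniq // eqxx mulr1 big1 ?addr0 //.
      by move=> t ts; rewrite eq_sym (negbTE ts) mulr0.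
    - rewrite big1_seq // => t /andP [_]; rewrite mem_enum => t_in.
      have t_lead : leadingb t := t_in.
      by case: eqP => [st|_]; [move: s_lead; rewrite st t_lead | rewrite mulr0].
  rewrite big_seq; apply: memv_suml => t t_lead.
  by apply: memvZ; apply: memv_span; apply: map_f.
apply: leq_trans (dimvS img_f) _; apply: leq_trans (dim_span _) _.
by rewrite size_map -cardE.
Qed.

Definition leading_witness (a : mon d n) : Bdeg K d n :=
  epsilon (inhabits 0) (fun x => x \in U /\ leads B x (expo a)).

Lemma leading_witnessP a : leadingb a ->
  leading_witness a \in U /\ leads B (leading_witness a) (expo a).
Proof.
move/propbP => [x xU x_a].
exact: (epsilon_spec (inhabits 0) (fun x => x \in U /\ leads B x (expo a)) (ex_intro _ x (conj xU x_a))).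
Qed.

Lemma leading_le_dim : (#|leadingb| <= \dim U)%nat.
Proof.
pose X := [tuple leading_witness (enum_val i) | i < #|leadingb|].
have X_nth (i : 'I_#|leadingb|) : X`_i = leading_witness (enum_val i).
  by rewrite -tnth_nth tnth_mktuple.
have X_free : free X.
  apply/freeP => k k_comb i; apply/eqP; apply: contraT => ki.
  have [j kj j_max] := @arg_maxnP _ i (fun j => k j != 0)
    (fun j => code B (expo (enum_val j))) ki.
  have := congr1 (fun y : Bdeg K d n => y (enum_val j)) k_comb.
  rewrite /= sum_ffunE ffunE (bigD1 j) //= big1 ?addr0.
  - have [wj _] := leads_at (proj2 (leading_witnessP (enum_valP j))).
    by rewrite X_nth ffunE scale_regularE => /eqP; rewrite mulf_eq0 (negbTE kj) (negbTE wj).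
  - move=> j' j'j; rewrite X_nth ffunE scale_regularE.
    have [-> | kj'] := eqVneq (k j') 0; first by rewrite mul0r.
    have le_j' : (code B (expo (enum_val j')) <= code B (expo (enum_val j)))%nat :=
      j_max j' kj'.
    have ne_j' : code B (expo (enum_val j')) != code B (expo (enum_val j)).
      by apply/negP => /eqP /(code_inj nB) /enum_val_inj j'_j; rewrite j'_j eqxx in j'j.
    have [_ w_above] := leads_at (proj2 (leading_witnessP (enum_valP j'))).
    by rewrite w_above ?mulr0 // ltn_neqAle ne_j' le_j'.
have span_X : (<<X>> <= U)%VS.
  by apply/span_subvP => y /mapP [i _ ->]; apply: (proj1 (leading_witnessP (enum_valP i))).
apply: leq_trans (dimvS span_X).
by move: X_free; rewrite /free size_tuple => /eqP ->.
Qed.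

Lemma dim_leading : \dim U = #|leadingb|.
Proof. by apply/eqP; rewrite eqn_leq dim_le_leading leading_le_dim. Qed.

End LeadingDimension.

(* By the
   dimension formula, dim F t counts the monomials whose jump is >= t, so
   nu_{S^n V} is the uniform probability on the jumps of the monomials. *)
Section Jumps.
Local Open Scope R_scope.
Variables (K : fieldType) (d B n : nat).
Hypothesis nB : (n < B)%nat.
Variable F : filtration (Bdeg K d n).
Hypothesis F_good : good_filt F.

Lemma leading_mono (a : mon d n) (U V : {vspace Bdeg K d n}) :
  leading B U a -> (U <= V)%VS -> leading B V a.
Proof. by move=> [x xU x_a] UV; exists x => //; apply: (subvP UV). Qed.

Lemma not_leading0 (a : mon d n) : ~ leading B (0%VS : {vspace Bdeg K d n}) a.
Proof.
move=> [x]; rewrite memv0 => /eqP -> /leads_at [].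
by rewrite ffunE eqxx.
Qed.

Lemma leading_somewhere (a : mon d n) : exists t, leading B (F t) a.
Proof.
case: F_good => _ _ F_exh _; have [t mon_t] := F_exh (monomial K a).
by exists t, (monomial K a) => //; apply: leads_monomial.
Qed.

Definition jump (a : mon d n) : R :=
  epsilon (inhabits 0) (fun l => forall t, leading B (F t) a <-> t <= l).

Lemma jumpP (a : mon d n) t : leading B (F t) a <-> t <= jump a.
Proof.
have := filt_threshold F_good (@leading_mono a) (@not_leading0 a) (leading_somewhere a).
by move/(epsilon_spec (inhabits 0) (fun l => forall t, leading B (F t) a <-> t <= l)).
Qed.

Lemma jump_attained (a : mon d n) : exists2 x, x \in F (jump a) & leads B x (expo a).
Proof. by apply/jumpP; apply: Rle_refl. Qed.

Lemma jump_ge (a : mon d n) t x : x \in F t -> leads B x (expo a) -> t <= jump a.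
Proof. by move=> xt x_a; apply/jumpP; exists x. Qed.

Lemma dim_filt t : \dim (F t) = #|[pred a : mon d n | propb (t <= jump a)]|.
Proof.
rewrite (dim_leading nB); apply: eq_card => a; rewrite !inE /leadingb.
by apply/propbP/propbP => /jumpP.
Qed.

Lemma dim_full : \dim (fullv : {vspace Bdeg K d n}) = #|{: mon d n}|.
Proof.
rewrite (dim_leading nB); apply: eq_card => a; rewrite !inE /leadingb.
by apply/propbP; exists (monomial K a); [apply: memvf | apply: leads_monomial].
Qed.

End Jumps.

Lemma count_card (T : finType) (P : pred T) : count P (enum T) = #|P|.
Proof. by rewrite -sum1_count -sum1_card big_enum_cond; apply: eq_bigl => i. Qed.

Lemma card_mon_gt0 (d n : nat) : (0 < d)%nat -> (0 < #|{: mon d n}|)%nat.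
Proof.
move=> d_pos; pose i0 := Ordinal d_pos.
pose v : {ffun 'I_d -> nat} := [ffun i => if i == i0 then n else 0%nat].
have v_sum : (\sum_i v i)%nat = n.
  rewrite (bigD1 i0) //= big1 ?addn0; first by rewrite ffunE eqxx.
  by move=> i /negbTE ii0; rewrite ffunE ii0.
by have [a _] := expo_surj v_sum; apply/card_gt0P; exists a.
Qed.

Section NuFormula.
Local Open Scope R_scope.

Lemma mass_from_uniform (T : Type) (h : T -> R) (w : R) (s : seq T) r :
  mass_from (List.map (fun a => (h a, w)) s) r = INR (count (fun a => propb (r <= h a)) s) * w.
Proof.
elim: s => [|x s IH]; first by rewrite /mass_from /=; lra.
have -> : mass_from (List.map (fun a => (h a, w)) (x :: s)) r =
    (if Rle_dec r (h x) then w else 0) + mass_from (List.map (fun a => (h a, w)) s) r.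
  by rewrite /mass_from /=; case: Rle_dec => _ /=; lra.
rewrite IH /= plus_INR /propb.
by case: excluded_middle_informative => rh; case: Rle_dec => rh' /=; try contradiction; lra.
Qed.

Lemma integral_scaled_nu (K : fieldType) (d B n : nat) (h : R -> R) (eps : R)
    (F : filtration (Bdeg K d n)) :
  (n < B)%nat -> (0 < d)%nat -> good_filt F ->
  integral_scaled h eps (nu F) =
  Rsum (List.map (fun a => / INR #|{: mon d n}| * h (eps * jump B F a)) (enum {: mon d n})).
Proof.
move=> nB d_pos F_good.
pose L := List.map (fun a => (jump B F a, / INR #|{: mon d n}|)) (enum {: mon d n}).
have L_nu : represents_nu F L.
  have card_pos : 0 < INR #|{: mon d n}| by apply/lt_0_INR/ltP/card_mon_gt0.
  split=> [p /List.in_map_iff [a [<- _]] /=|r]; first by left; apply: Rinv_0_lt_compat.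
  by rewrite mass_from_uniform count_card (@dim_full K d B n nB) -(@dim_filt K d B n nB F F_good).
have nu_spec : represents_nu F (nu F).
  exact: (epsilon_spec (inhabits nil) (represents_nu F) (ex_intro _ L L_nu)).
have same_mass r : mass_from (nu F) r = mass_from L r.
  by case: nu_spec => _ ->; case: L_nu => _ ->.
have := atom_integral_unique same_mass (fun x => h (eps * x)).
by rewrite /atom_integral /integral_scaled => ->; rewrite List.map_map.
Qed.

End NuFormula.

(* Words over the alphabet 'I_d weighted by the Polya urn law: starting from
   one ball of each of the d colours, draw a ball and put it back together
   with a new ball of the same colour.  This law is exchangeable (invariant under reversal)
   and consistent (forgetting the last letters gives the law of shorter
   words); hence every contiguous block of length m of a random word has the
   urn law of words of length m.  Moreover the letter counts of a random word
   of length n are uniformly distributed over the monomials of degree n. *)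
Section UrnLaw.
Local Open Scope R_scope.
Variable d : nat.
Hypothesis d_pos : (0 < d)%nat.

Fixpoint words n : seq (seq 'I_d) :=
  if n is n'.+1 then [seq rcons s j | s <- words n', j <- enum 'I_d] else [:: [::]].

Lemma mem_words n s : (s \in words n) = (size s == n).
Proof.
elim: n s => [|n IH] s /=; first by rewrite mem_seq1 size_eq0.
apply/allpairsP/idP => [[[s' j] [/= s'_in _ ->]]|].
- by rewrite size_rcons eqSS -IH.
- case/lastP: s => [//|s' x]; rewrite size_rcons eqSS => s'_size.
  by exists (s', x); split; rewrite /= ?IH ?mem_enum.
Qed.

Lemma uniq_words n : uniq (words n).
Proof.
elim: n => [//|n IH] /=; apply: allpairs_uniq => //; first exact: enum_uniq.
by move=> [s j] [s' j'] _ _ /= /rcons_inj [-> ->].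
Qed.

Definition counts (s : seq 'I_d) : {ffun 'I_d -> nat} := [ffun j => count_mem j s].

Lemma counts_sum s : (\sum_j counts s j)%nat = size s.
Proof.
elim: s => [|x s IH]; first by rewrite big1 // => j _; rewrite ffunE.
rewrite /= -IH (bigD1 x) //= [in RHS](bigD1 x) //= !ffunE /= eqxx add1n.
by congr (_.+1 + _)%nat; apply: eq_bigr => j jx; rewrite !ffunE /= eq_sym (negbTE jx).
Qed.

Lemma counts_rcons s j i : counts (rcons s j) i = (counts s i + (j == i))%nat.
Proof. by rewrite !ffunE -cats1 count_cat /= addn0. Qed.

Lemma counts_rev s : counts (rev s) = counts s.
Proof. by apply/ffunP => j; rewrite !ffunE count_rev. Qed.

Definition urn_norm (n : nat) : R := INR (d.-1)`! / INR (n + d.-1)`!.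

Definition urn_weight (s : seq 'I_d) : R :=
  INR (\prod_(j < d) (counts s j)`!) * urn_norm (size s).

Lemma urn_weight_ge0 s : 0 <= urn_weight s.
Proof.
apply: Rmult_le_pos; first exact: pos_INR.
apply: Rmult_le_pos; first exact: pos_INR.
by apply/Rlt_le/Rinv_0_lt_compat/lt_0_INR/ltP; apply: fact_gt0.
Qed.

Lemma urn_weight_rev s : urn_weight (rev s) = urn_weight s.
Proof. by rewrite /urn_weight counts_rev size_rev. Qed.

(* One step of the urn: colour j is drawn with probability (c_j + 1)/(n + d). *)
Lemma urn_weight_rcons s j :
  urn_weight (rcons s j) = urn_weight s * (INR (counts s j).+1 / INR (size s + d)).
Proof.
rewrite /urn_weight /urn_norm size_rcons.
have prod_rcons : (\prod_(i < d) (counts (rcons s j) i)`! =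
    (counts s j).+1 * \prod_(i < d) (counts s i)`!)%nat.
  rewrite (bigD1 j) //= [in RHS](bigD1 j) //= counts_rcons eqxx addn1 factS -mulnA.
  by congr (_ * (_ * _))%nat; apply: eq_bigr => i ij; rewrite counts_rcons eq_sym (negbTE ij) addn0.
have fact_succ : (((size s).+1 + d.-1)`! = (size s + d) * (size s + d.-1)`!)%nat.
  by rewrite addSn factS -addnS prednK.
rewrite prod_rcons fact_succ !mult_INR.
have sd_neq0 : INR (size s + d) <> 0.
  by apply: not_0_INR; apply/eqP; rewrite -lt0n (leq_trans d_pos (leq_addl _ _)).
have fact_neq0 : INR (size s + d.-1)`! <> 0.
  by apply: not_0_INR; apply/eqP; rewrite -lt0n fact_gt0.
by field.
Qed.

Lemma urn_weight_extend s : \big[Rplus/0]_(j <- enum 'I_d) urn_weight (rcons s j) = urn_weight s.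
Proof.
under eq_bigr => j _ do rewrite urn_weight_rcons /Rdiv -Rmult_assoc.
rewrite -Rsum_distr_r -Rsum_distr -INR_sum.
have -> : (\sum_(j <- enum 'I_d) (counts s j).+1 = size s + d)%nat.
  rewrite big_enum /=; under eq_bigr => j _ do rewrite -addn1.
  by rewrite big_split /= counts_sum sum1_card card_ord.
rewrite Rmult_assoc Rinv_r ?Rmult_1_r //.
by apply: not_0_INR; apply/eqP; rewrite -lt0n (leq_trans d_pos (leq_addl _ _)).
Qed.

Lemma urn_total n : \big[Rplus/0]_(s <- words n) urn_weight s = 1.
Proof.
elim: n => [|n IH].
  rewrite /= big_cons big_nil /urn_weight /urn_norm /= add0n.
  rewrite big1 => [|j _]; last by rewrite ffunE.
  rewrite /Rdiv Rinv_r ?Rmult_1_r ?Rplus_0_r //.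
  by apply: not_0_INR; apply/eqP; rewrite -lt0n fact_gt0.
by rewrite /= big_allpairs_dep -IH; apply: eq_bigr => s _; apply: urn_weight_extend.
Qed.

Lemma urn_prefix m k (G : seq 'I_d -> R) :
  \big[Rplus/0]_(s <- words (m + k)%nat) (urn_weight s * G (take m s)) =
  \big[Rplus/0]_(t <- words m) (urn_weight t * G t).
Proof.
elim: k => [|k IH].
  rewrite addn0 big_seq [RHS]big_seq; apply: eq_bigr => s.
  by rewrite mem_words => /eqP <-; rewrite take_size.
rewrite addnS /= big_allpairs_dep -IH big_seq [RHS]big_seq.
apply: eq_bigr => s; rewrite mem_words => /eqP s_size.
have take_rcons j : take m (rcons s j) = take m s.
  by rewrite -cats1 takel_cat // s_size leq_addr.
under eq_bigr => j _ do rewrite take_rcons.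
by rewrite -Rsum_distr_r urn_weight_extend.
Qed.

Lemma urn_rev n (G : seq 'I_d -> R) :
  \big[Rplus/0]_(s <- words n) (urn_weight s * G (rev s)) =
  \big[Rplus/0]_(s <- words n) (urn_weight s * G s).
Proof.
under eq_bigr => s _ do rewrite -urn_weight_rev.
rewrite -(big_map rev predT (fun s => urn_weight s * G s)).
apply: perm_big; apply: uniq_perm.
- by rewrite (map_inj_uniq (can_inj (@revK _))) uniq_words.
- exact: uniq_words.
- move=> s; apply/mapP/idP => [[t t_in ->]|s_in].
  + by rewrite mem_words size_rev -mem_words.
  + by exists (rev s); rewrite ?revK // mem_words size_rev -mem_words.
Qed.

Lemma urn_block N a m (G : {ffun 'I_d -> nat} -> R) : (a + m <= N)%nat ->
  \big[Rplus/0]_(s <- words N) (urn_weight s * G (counts (take m (drop a s)))) =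
  \big[Rplus/0]_(u <- words m) (urn_weight u * G (counts u)).
Proof.
move=> amN; have -> : N = ((m + a) + (N - (m + a)))%nat by rewrite subnKC // addnC.
under eq_bigr => s _ do rewrite take_drop.
rewrite (urn_prefix (m + a) _ (fun t => G (counts (drop a t)))).
rewrite -(urn_rev (m + a) (fun t => G (counts (drop a t)))).
rewrite -(urn_prefix m a (fun t => G (counts t))).
rewrite big_seq [RHS]big_seq; apply: eq_bigr => t; rewrite mem_words => /eqP t_size.
by rewrite drop_rev t_size addnK counts_rev.
Qed.

Lemma urn_average_sum (I : Type) (l : seq I) n (a C : I -> R) (h : I -> seq 'I_d -> R) :
  \big[Rplus/0]_(i <- l) (a i * \big[Rplus/0]_(s <- words n) (urn_weight s * h i s) - C i) =
  \big[Rplus/0]_(s <- words n) (urn_weight s * \big[Rplus/0]_(i <- l) (a i * h i s - C i)).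
Proof.
under [RHS]eq_bigr => s _ do rewrite Rsum_distr.
rewrite exchange_big /=; apply: eq_bigr => i _.
under [RHS]eq_bigr => s _ do rewrite /Rminus Rmult_plus_distr_l.
rewrite Rsum_split -Rsum_distr_r urn_total Rmult_1_l Rsum_distr.
by congr (_ + _); apply: eq_bigr => s _; ring.
Qed.

Definition vdec (v : {ffun 'I_d -> nat}) (j : 'I_d) : {ffun 'I_d -> nat} :=
  [ffun i => if i == j then (v i).-1 else v i].

Lemma counts_rcons_eq s j (v : {ffun 'I_d -> nat}) :
  (counts (rcons s j) == v) = (0 < v j)%nat && (counts s == vdec v j).
Proof.
apply/eqP/andP => [<-|[vj /eqP cs]].
- split; first by rewrite counts_rcons eqxx addn1.
  apply/eqP/ffunP => i; rewrite [vdec _ _ _]ffunE counts_rcons.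
  case: (i =P j) => [->|ij]; first by rewrite eqxx addn1.
  by case: (j =P i) => [ji|]; [case: ij | rewrite addn0].
- apply/ffunP => i; rewrite counts_rcons cs [vdec _ _ _]ffunE.
  case: (i =P j) => [->|ij]; first by rewrite eqxx addn1 prednK.
  by case: (j =P i) => [ji|]; [case: ij | rewrite addn0].
Qed.

Lemma vdec_sum (v : {ffun 'I_d -> nat}) j : (0 < v j)%nat ->
  (\sum_i vdec v j i)%nat = (\sum_i v i).-1.
Proof.
move=> vj; rewrite (bigD1 j) //= [in RHS](bigD1 j) //= ffunE eqxx.
rewrite -[in RHS](prednK vj) addSn /=; congr (_ + _)%nat.
by apply: eq_bigr => i ij; rewrite ffunE (negbTE ij).
Qed.

Lemma vdec_fact (v : {ffun 'I_d -> nat}) j : (0 < v j)%nat ->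
  (\prod_i (v i)`! = v j * \prod_i (vdec v j i)`!)%nat.
Proof.
move=> vj; rewrite (bigD1 j) //= [in RHS](bigD1 j) //= ffunE eqxx.
rewrite -{1}(prednK vj) factS prednK // -mulnA; congr (_ * (_ * _))%nat.
by apply: eq_bigr => i ij; rewrite ffunE (negbTE ij).
Qed.

Lemma count_sum (T : Type) (P : pred T) (l : seq T) : count P l = (\sum_(x <- l) P x)%nat.
Proof. by elim: l => [|x l IH]; rewrite ?big_nil ?big_cons //= IH. Qed.

Lemma multinomial n (v : {ffun 'I_d -> nat}) :
  (count (fun s => counts s == v) (words n) * \prod_j (v j)`! =
   ((\sum_j v j) == n) * n`!)%nat.
Proof.
elim: n v => [|n IH] v.
  rewrite /= addn0 fact0 muln1.
  have [v0|v_ne0] := eqVneq (\sum_j v j)%nat 0%nat.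
    have vj0 j : v j = 0%nat by move/eqP: v0; rewrite sum_nat_eq0 => /forallP /(_ j) /eqP.
    have -> : counts [::] = v by apply/ffunP => j; rewrite ffunE vj0.
    by rewrite eqxx big1 // => j _; rewrite vj0.
  case: eqP => [c0|] //; move: v_ne0; rewrite -c0.
  by rewrite big1 // => j _; rewrite ffunE.
have step : count (fun s => counts s == v) (words n.+1) =
    (\sum_j (0 < v j)%nat * count (fun s => counts s == vdec v j) (words n))%nat.
  rewrite count_sum /= big_allpairs_dep.
  under eq_bigr => s _ do under eq_bigr => j _ do rewrite counts_rcons_eq -mulnb.
  by rewrite exchange_big -big_enum; apply: eq_bigr => j _; rewrite count_sum big_distrr.
rewrite step big_distrl /=.
under eq_bigr => j _ do rewrite -mulnA.
have term j : ((0 < v j)%nat * (count (fun s => counts s == vdec v j) (words n) *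
    \prod_i (v i)`!) = v j * (((\sum_i v i) == n.+1) * n`!))%nat.
  have [->|vj] := posnP (v j); first by [].
  rewrite mul1n (vdec_fact vj) mulnCA IH (vdec_sum vj).
  have sum_pos : (0 < \sum_i v i)%nat by rewrite (leq_trans vj) // (bigD1 j) //= leq_addr.
  by rewrite -[in RHS](prednK sum_pos) eqSS.
under eq_bigr => j _ do rewrite term.
rewrite -big_distrl /=; case: eqP => [->|_]; last by rewrite !muln0.
by rewrite !mul1n factS.
Qed.

Lemma sum_words_by_monomial n (G : seq 'I_d -> R) :
  \big[Rplus/0]_(s <- words n) G s =
  \big[Rplus/0]_(a <- enum {: mon d n}) \big[Rplus/0]_(s <- words n | counts s == expo a) G s.
Proof.
under [RHS]eq_bigr => a _ do rewrite big_mkcond.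
rewrite exchange_big /= big_seq [RHS]big_seq; apply: eq_bigr => s.
rewrite mem_words => /eqP s_size.
have [a0 a0_s] : exists a0 : mon d n, expo a0 = counts s by apply: expo_surj; rewrite counts_sum.
rewrite (bigD1_seq a0) /= ?mem_enum ?enum_uniq // a0_s eqxx big1 ?Rplus_0_r // => a a_a0.
by case: eqP => // s_a; move: a_a0; rewrite (expo_inj (etrans a0_s s_a)) eqxx.
Qed.

Lemma urn_uniform n (H : {ffun 'I_d -> nat} -> R) :
  \big[Rplus/0]_(s <- words n) (urn_weight s * H (counts s)) =
  / INR #|{: mon d n}| * \big[Rplus/0]_(a <- enum {: mon d n}) H (expo a).
Proof.
pose c := INR n`! * urn_norm n.
have sum_c (H' : {ffun 'I_d -> nat} -> R) :
    \big[Rplus/0]_(s <- words n) (urn_weight s * H' (counts s)) =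
    c * \big[Rplus/0]_(a <- enum {: mon d n}) H' (expo a).
  rewrite sum_words_by_monomial Rsum_distr; apply: eq_bigr => a _.
  rewrite big_mkcond.
  have class_a s : s \in words n -> (if counts s == expo a then urn_weight s * H' (counts s) else 0)
      = (if counts s == expo a
         then INR (\prod_j (expo a j)`!) * urn_norm n * H' (expo a) else 0).
    by rewrite mem_words => /eqP s_size; case: eqP => // cs; rewrite /urn_weight s_size cs.
  rewrite (eq_big_seq _ class_a) -big_mkcond Rsum_const.
  have := multinomial n (expo a); rewrite expo_sum eqxx mul1n => count_a.
  by rewrite /c -count_a mult_INR !Rmult_assoc.
have c_card : c * INR #|{: mon d n}| = 1.
  have := sum_c (fun _ => 1); under eq_bigr => s _ do rewrite Rmult_1_r.
  rewrite urn_total Rsum_const Rmult_1_r => ->.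
  by congr (_ * INR _); rewrite count_predT cardE.
rewrite sum_c; congr (_ * _).
have card_neq0 : INR #|{: mon d n}| <> 0 by move=> c0; move: c_card; rewrite c0 Rmult_0_r; lra.
by apply: (Rmult_eq_reg_r (INR #|{: mon d n}|)) => //; rewrite c_card Rinv_l.
Qed.

End UrnLaw.

Lemma count_blocks (T : eqType) (P : pred T) (l : seq nat) (s : seq T) :
  size s = sumn l ->
  count P s = (\sum_(0 <= k < size l) count P (take (nth 0 l k) (drop (sumn (take k l)) s)))%nat.
Proof.
elim: l s => [|n l IH] s s_size.
  by move: s_size => /= /eqP; rewrite size_eq0 => /eqP ->; rewrite big_geq.
rewrite /= big_nat_recl // /= drop0 -{1}(cat_take_drop n s) count_cat.
congr (_ + _)%nat; rewrite (IH (drop n s)); last by rewrite size_drop s_size /= addKn.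
by apply: eq_bigr => k _; rewrite /= drop_drop addnC.
Qed.

Section Blocks.
Variables (d r : nat) (ns : 'I_r -> nat).

Definition block_sizes : seq nat := [seq ns i | i <- enum 'I_r].

Definition block (i : 'I_r) (s : seq 'I_d) : seq 'I_d :=
  take (ns i) (drop (sumn (take i block_sizes)) s).

Lemma sumn_block_sizes : sumn block_sizes = (\sum_(i < r) ns i)%nat.
Proof. by rewrite /block_sizes sumnE big_map big_enum. Qed.

Lemma nth_block_sizes (i : 'I_r) : nth 0%nat block_sizes i = ns i.
Proof. by rewrite /block_sizes (nth_map i) ?size_enum_ord // nth_ord_enum. Qed.

Lemma block_end (i : 'I_r) : (sumn (take i block_sizes) + ns i <= \sum_(j < r) ns j)%nat.
Proof.
rewrite -sumn_block_sizes -nth_block_sizes.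
have i_lt : (i < size block_sizes)%nat by rewrite size_map size_enum_ord.
rewrite -[X in (_ <= sumn X)%nat](cat_take_drop i.+1) sumn_cat.
by rewrite (take_nth 0%nat i_lt) -cats1 sumn_cat /= addn0 leq_addr.
Qed.

Lemma size_block (i : 'I_r) s : size s = (\sum_(j < r) ns j)%nat -> size (block i s) = ns i.
Proof.
move=> s_size; rewrite /block size_takel // size_drop s_size leq_subRL ?block_end //.
exact: leq_trans (leq_addr _ _) (block_end i).
Qed.

Lemma counts_blocks (s : seq 'I_d) : size s = (\sum_(i < r) ns i)%nat ->
  foldr (fun i acc => vadd (counts (block i s)) acc) (vzero d) (enum 'I_r) = counts s.
Proof.
move=> s_size; apply/ffunP => j.
have -> : forall l : seq 'I_r,
    foldr (fun i acc => vadd (counts (block i s)) acc) (vzero d) l j =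
    (\sum_(i <- l) counts (block i s) j)%nat.
  by elim=> [|x l IH]; rewrite ?big_nil ?big_cons /= ffunE // IH.
rewrite big_enum ffunE (count_blocks _ (l := block_sizes) (s := s)); last by rewrite sumn_block_sizes.
rewrite size_map size_enum_ord big_mkord; apply: eq_bigr => i _.
by rewrite ffunE nth_block_sizes.
Qed.

End Blocks.

(* Multiplying elements
   x_i of F_{n_i}(jump a_i) with leading monomials a_i gives, by the
   quasi-filtration axiom, an element of F_N(sum_i (jump a_i - f n_i)) whose
   leading monomial is the product of the a_i: jumps are superadditive up to
   the defects f(n_i). *)
Section QuasiFiltrationJumps.
Local Open Scope R_scope.
Variables (K : fieldType) (d : nat) (F : forall n : nat, filtration (Bdeg K d n)).
Hypothesis F_good : forall n, good_filt (F n).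
Variables (B : nat) (f : nat -> R) (n0 : nat).
Hypothesis F_quasi : quasi_filtered F f n0.

Lemma jump_superadditive (r : nat) (ns : 'I_r -> nat) (a : forall i, mon d (ns i))
    (b : mon d (\sum_(i < r) ns i)) :
  (0 < r)%nat -> (forall i, n0 <= ns i)%nat -> (\sum_(i < r) ns i < B)%nat ->
  expo b = foldr (fun i acc => vadd (expo (a i)) acc) (vzero d) (enum 'I_r) ->
  \big[Rplus/0]_(i <- enum 'I_r) (jump B (F (ns i)) (a i) - f (ns i)) <=
  jump B (F (\sum_(i < r) ns i)%nat) b.
Proof.
move=> r_pos ns_n0 sumB b_prod.
have attained i :
    exists y, y \in F (ns i) (jump B (F (ns i)) (a i)) /\ leads B y (expo (a i)).
  by have [y] := @jump_attained K d B (ns i) (F (ns i)) (F_good (ns i)) (a i); exists y.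
pose x i := proj1_sig (constructive_indefinite_description _ (attained i)).
have x_spec i : x i \in F (ns i) (jump B (F (ns i)) (a i)) /\ leads B (x i) (expo (a i)).
  exact: (proj2_sig (constructive_indefinite_description _ (attained i))).
have prod_in := @F_quasi r ns _ x r_pos ns_n0 (fun i => proj1 (x_spec i)).
have sumB' : (\sum_(i <- enum 'I_r) ns i < B)%nat by rewrite big_enum.
have [deg_prod lead_prod] :=
  @leads_prodH K d B _ (enum 'I_r) ns x (fun i => expo (a i)) sumB' (fun i => proj2 (x_spec i)).
move: prod_in deg_prod lead_prod; cbv zeta.
case: (prodH _) => m y /= y_in deg_y; rewrite big_enum /= in deg_y; subst m.
rewrite -b_prod -Rsum_big => y_b; apply: Rle_trans (@jump_ge K d B _ _ (F_good _) _ _ _ y_in y_b).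
exact: Rle_refl.
Qed.

End QuasiFiltrationJumps.

Section JumpsOnWords.
Local Open Scope R_scope.
Variables (K : fieldType) (d : nat) (F : forall n : nat, filtration (Bdeg K d n)).
Hypothesis F_good : forall n, good_filt (F n).
Hypothesis d_pos : (0 < d)%nat.
Variable B : nat.

Definition jump_at (m : nat) (v : {ffun 'I_d -> nat}) : R :=
  epsilon (inhabits 0) (fun l => exists a : mon d m, expo a = v /\ l = jump B (F m) a).

Lemma jump_at_expo m (a : mon d m) : jump_at m (expo a) = jump B (F m) a.
Proof.
have ex : exists l, exists a' : mon d m, expo a' = expo a /\ l = jump B (F m) a'.
  by exists (jump B (F m) a), a.
by rewrite /jump_at; have [a' [/expo_inj -> ->]] := epsilon_spec (inhabits 0) _ ex.
Qed.

Lemma I_n_urn (g : R -> R) m : (m < B)%nat ->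
  I_n F g m = \big[Rplus/0]_(s <- words d m) (urn_weight s * g (/ INR m * jump_at m (counts s))).
Proof.
move=> mB; rewrite /I_n (@integral_scaled_nu K d B m g _ (F m) mB d_pos (F_good m)) Rsum_big.
rewrite (urn_uniform d_pos m (fun v => g (/ INR m * jump_at m v))) Rsum_distr.
by apply: eq_bigr => a _; rewrite jump_at_expo.
Qed.

Variables (r : nat) (ns : 'I_r -> nat).
Let N := (\sum_(i < r) ns i)%nat.

Lemma I_n_block (g : R -> R) (i : 'I_r) : (N < B)%nat ->
  I_n F g (ns i) = \big[Rplus/0]_(s <- words d N)
    (urn_weight s * g (/ INR (ns i) * jump_at (ns i) (counts (block ns i s)))).
Proof.
move=> NB; have niB : (ns i < B)%nat by apply: leq_ltn_trans NB; rewrite /N (bigD1 i) //= leq_addr.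
by rewrite (I_n_urn g niB) /block
  (urn_block d_pos (fun v => g (/ INR (ns i) * jump_at (ns i) v)) (block_end ns i)).
Qed.

Lemma jump_at_blocks (f : nat -> R) (n0 : nat) (s : seq 'I_d) :
  quasi_filtered F f n0 -> (0 < r)%nat -> (forall i, n0 <= ns i)%nat -> (N < B)%nat ->
  size s = N ->
  \big[Rplus/0]_(i <- enum 'I_r) (jump_at (ns i) (counts (block ns i s)) - f (ns i)) <=
  jump_at N (counts s).
Proof.
move=> F_quasi r_pos ns_n0 NB s_size.
have block_mon i : exists a : mon d (ns i), expo a = counts (block ns i s).
  by apply: expo_surj; rewrite counts_sum size_block.
pose a i := proj1_sig (constructive_indefinite_description _ (block_mon i)).
have a_expo i : expo (a i) = counts (block ns i s).
  exact: (proj2_sig (constructive_indefinite_description _ (block_mon i))).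
have [b b_expo] : exists b : mon d N, expo b = counts s by apply: expo_surj; rewrite counts_sum.
have b_prod : expo b = foldr (fun i acc => vadd (expo (a i)) acc) (vzero d) (enum 'I_r).
  by rewrite b_expo -(counts_blocks s_size); elim: (enum 'I_r) => //= i l ->; rewrite a_expo.
rewrite -b_expo jump_at_expo.
apply: Rle_trans (jump_superadditive F_good F_quasi r_pos ns_n0 NB b_prod).
by apply: Req_le; apply: eq_bigr => i _; rewrite -a_expo jump_at_expo.
Qed.

End JumpsOnWords.

(* Lipschitz continuity absorbs the defects f_i, Jensen's inequality merges
   the terms and monotonicity passes from sum_i (y_i - f_i) to Y. *)
Section DeterministicCore.
Local Open Scope R_scope.

Lemma concave_merge (g : R -> R) (c : R) (I : Type) (l : seq I) (w y f : I -> R) (Y : R) :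
  concave g -> increasingR g -> lipschitz c g ->
  (forall i, 0 < w i) -> (forall i, 0 <= f i) -> l <> [::] ->
  \big[Rplus/0]_(i <- l) (y i - f i) <= Y ->
  \big[Rplus/0]_(i <- l) (w i * g (/ w i * y i) - c * f i) <=
  (\big[Rplus/0]_(i <- l) w i) * g (/ (\big[Rplus/0]_(i <- l) w i) * Y).
Proof.
move=> g_conc g_incr g_lip w_pos f_ge0 l_ne sum_le.
set W := \big[Rplus/0]_(i <- l) w i.
have W_pos : 0 < W by apply: Rsum_pos.
pose z i := (y i - f i) / w i.
have absorb i : w i * g (/ w i * y i) - c * f i <= w i * g (z i).
  have wi := w_pos i; have fi := f_ge0 i.
  have gap : / w i * y i - z i = f i / w i by rewrite /z; field; lra.
  have lip := Rle_trans _ _ _ (Rle_abs _) (g_lip (/ w i * y i) (z i)).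
  rewrite gap Rabs_pos_eq in lip; last by apply: Rmult_le_pos => //; apply/Rlt_le/Rinv_0_lt_compat.
  have := Rmult_le_compat_l _ _ _ (Rlt_le _ _ wi) lip.
  have -> : w i * (c * (f i / w i)) = c * f i by field; lra.
  lra.
apply: Rle_trans (@Rsum_le _ l (fun _ => true) _ _ (fun i _ => absorb i)) _.
apply: Rle_trans (@jensen _ g l w z g_conc w_pos l_ne) _; fold W.
apply: Rmult_le_compat_l; first lra.
apply: g_incr; rewrite /Rdiv Rmult_comm; apply: Rmult_le_compat_l.
  by apply/Rlt_le/Rinv_0_lt_compat.
apply: Rle_trans sum_le; apply: Req_le; apply: eq_bigr => i _.
by rewrite /z; have := w_pos i => wi; field; lra.
Qed.

End DeterministicCore.

Theorem mainTheorem6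
  (K : fieldType) (d : nat) (d_pos : (0 < d)%nat)
  (F : forall n : nat, filtration (Bdeg K d n))
  (F_good : forall n : nat, good_filt (F n))
  (f : nat -> R) (f_nonneg : forall n : nat, Rle R0 (f n))
  (n0 : nat) (hquasi : quasi_filtered F f n0)
  (c : R) (c_pos : Rlt R0 c)
  (g : R -> R) (g_conc : concave g) (g_incr : increasingR g) (g_lip : lipschitz c g) :
  forall (r : nat) (ns : 'I_r -> nat),
    (2 <= r)%nat ->
    (forall i, (maxn n0 1 <= ns i)%nat) ->
    let N := (\sum_(i < r) ns i)%nat in
    Rge (Rmult (INR N) (I_n F g N))
        (Rsum (List.map (fun i => Rminus (Rmult (INR (ns i)) (I_n F g (ns i)))
                                          (Rmult c (f (ns i))))
                        (enum 'I_r))).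
Proof.
move=> r ns r_ge2 ns_ge N.
have ns_pos i : (0 < ns i)%nat by have := ns_ge i; rewrite geq_max => /andP [].
have ns_n0 i : (n0 <= ns i)%nat by have := ns_ge i; rewrite geq_max => /andP [].
have r_pos : (0 < r)%nat by apply: leq_trans r_ge2.
have enum_ne : enum 'I_r <> [::].
  by move/(congr1 size); rewrite size_enum_ord => r0; rewrite r0 in r_pos.
have weights_N : \big[Rplus/R0]_(i <- enum 'I_r) INR (ns i) = INR N.
  by rewrite -INR_sum big_enum.
have NB := ltnSn N.
(* Both sides are averages over urn-random words of length N ... *)
apply: Rle_ge; rewrite Rsum_big (I_n_urn F_good d_pos g NB).
under eq_bigr => i _ do rewrite (I_n_block F_good d_pos g i NB).
rewrite urn_average_sum // Rsum_distr big_seq [X in Rle _ X]big_seq.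
(* ... which are compared word by word. *)
apply: Rsum_le => s; rewrite mem_words => /eqP s_size.
rewrite [X in Rle _ X]Rmult_comm Rmult_assoc.
apply: Rmult_le_compat_l; first exact: urn_weight_ge0.
rewrite Rmult_comm -weights_N; apply: concave_merge => //.
- by move=> i; apply/lt_0_INR/ltP.
- exact: (jump_at_blocks F_good hquasi r_pos ns_n0 NB s_size).
Qed.
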